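(* Let $d$ be the shortest-path distance on a finite state space $\mathcal{S}$ (with $d(s,s)=0$), $V^*=-d$, and let $\epsilon_V,\epsilon_\psi,\epsilon_\pi\ge 0$. Assume: (1) $V_\omega:\mathcal{S}\times\mathcal{S}\to\mathbb{R}$ satisfies $|V_\omega(s,g)-V^*(s,g)|\le\epsilon_V$ for all $s,g$; (2) the anticipation model $\phi:\mathcal{S}\times\mathcal{S}\to\mathcal{S}$ satisfies $\max(0,V_\omega(s,g)-V_\omega(s,\hat s)-V_\omega(\hat s,g))\le\epsilon_\psi$ for all $s,g$, where $\hat s=\phi(s,g)$; (3) the low-level policy, when tasked with reaching $\hat s$ from $s$, reaches $\hat s$ and incurs cost (number of steps) $C_\theta(s,\hat s)\le d(s,\hat s)+\epsilon_\pi$. Let $s_0,s_g\in\mathcal{S}$ and let $s_0,s_1,\dots,s_M$ be the states with $s_{k+1}=\phi(s_k,s_g)$ for $0\le k<M$ and $s_M=s_g$. Then the total cost $C_{RLA}(s_0,s_g)=\sum_{k=0}^{M-1}C_\theta(s_k,s_{k+1})$ satisfies $$C_{RLA}(s_0,s_g)\le d(s_0,s_g)+M\,(\epsilon_\pi+3\epsilon_V+\epsilon_\psi).$$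
   Context: Setting: a goal-conditioned MDP with finite state space, reward $-1$ per step and $0$ upon reaching the goal; $d(s,g)$ is the minimum number of steps from $s$ to $g$ and the optimal value function is $V^*(s,g)=-d(s,g)$. $V_\omega$ is a learned value function, $\phi$ an anticipation model proposing subgoals, and $C_\theta(s,\hat s)$ the cost incurred by the low-level goal-conditioned policy travelling from $s$ to subgoal $\hat s$. *)

From mathcomp Require Import all_boot all_order all_algebra.
Set Implicit Arguments. Unset Strict Implicit. Unset Printing Implicit Defensive.
Import Order.TTheory GRing.Theory Num.Theory.

(* The finite state space S, with one-step transition relation e:
   e s s' holds iff some action moves the agent from s to s' in one step. *)

Definition reach_in (S : finType) (e : rel S) (n : nat) (s g : S) : bool :=
  [exists p : n.-tuple S, path e s p && (last s p == g)].

Lemma reach_in_ex (S : finType) (e : rel S) (s g : S) :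
  connect e s g -> exists n, reach_in e n s g.
Proof.
move=> /connectP [p Hp Hl]; exists (size p).
apply/existsP; exists (in_tuple p) => /=.
by rewrite Hp -Hl eqxx.
Qed.

(* Shortest-path distance d(s,g): minimum number of steps from s to g
   (defined as 0 by convention when g is unreachable from s; the theorem
   assumes every goal is reachable). *)
Definition dist (S : finType) (e : rel S) (s g : S) : nat :=
  match boolP (connect e s g) with
  | AltTrue h => ex_minn (reach_in_ex h)
  | AltFalse _ => 0
  end.

Definition Vstar (R : numDomainType) (S : finType) (e : rel S) (s g : S) : R :=
  - ((dist e s g)%:R).

From mathcomp Require Import all_boot all_order all_algebra.
From mathcomp Require Import lra.
Import Order.TTheory GRing.Theory Num.Theory.
Local Open Scope ring_scope.

(* A step from [s] to [m = phi s g] costs at most d(s,m) + epspi, and the detour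
   d(s,m) + d(m,g) exceeds d(s,g) by at most 3 epsV + epspsi, since each of the
   three values of [Vw] in the anticipation bound is epsV-close to -d. So each
   step lowers the remaining distance to [g] by at least its cost minus
   epspi + 3 epsV + epspsi, and summing over the M steps telescopes. *)

Lemma telescope_sum_le (R : realDomainType) (c D : nat -> R) (eps : R) (M : nat) :
  (forall k, (k < M)%N -> c k + D k.+1 <= D k + eps) ->
  \sum_(k < M) c k + D M <= D 0%N + M%:R * eps.
Proof.
elim: M => [|M IH] step; first by rewrite big_ord0 mul0r add0r addr0.
have IHM : \sum_(k < M) c k + D M <= D 0%N + M%:R * eps.
  by apply: IH => k ltkM; apply: step; apply: ltnW.
have := step M (ltnSn M).
rewrite big_ord_recr /= -natr1 mulrDl mul1r; lra.
Qed.

Section ApproximateValue.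

Variables (R : realFieldType) (S : finType) (e : rel S).
Variables (Vw : S -> S -> R) (epsV : R).
Hypothesis hV : forall s g : S, `|Vw s g - Vstar R e s g| <= epsV.

Lemma dist_detour_le (s m g : S) (delta : R) :
  Vw s g - Vw s m - Vw m g <= delta ->
  (dist e s m)%:R + (dist e m g)%:R <= (dist e s g)%:R + (3%:R * epsV + delta).
Proof.
move: (hV s g) (hV s m) (hV m g); rewrite /Vstar !ler_norml.
move=> /andP[? ?] /andP[? ?] /andP[? ?] ?; lra.
Qed.

End ApproximateValue.

Theorem theorem2 (R : realFieldType) (S : finType) (e : rel S)
  (Vw : S -> S -> R) (phi : S -> S -> S) (C : S -> S -> nat)
  (epsV epspsi epspi : R)
  (hreach : forall s g : S, connect e s g)
  (hV0 : 0 <= epsV) (hpsi0 : 0 <= epspsi) (hpi0 : 0 <= epspi)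
  (hV : forall s g : S, `|Vw s g - Vstar R e s g| <= epsV)
  (hpsi : forall s g : S,
     Num.max 0 (Vw s g - Vw s (phi s g) - Vw (phi s g) g) <= epspsi)
  (hpi : forall s g : S,
     ((C s (phi s g))%:R : R) <= ((dist e s (phi s g))%:R : R) + epspi)
  (s0 sg : S) (M : nat) (traj : nat -> S)
  (htraj0 : traj 0%N = s0)
  (htrajS : forall k : nat, (k < M)%N -> traj k.+1 = phi (traj k) sg)
  (htrajM : traj M = sg) :
  \sum_(k < M) ((C (traj k) (traj k.+1))%:R : R)
    <= (dist e s0 sg)%:R + M%:R * (epspi + 3%:R * epsV + epspsi).
Proof.
have step s : ((C s (phi s sg))%:R : R) + (dist e (phi s sg) sg)%:R
    <= (dist e s sg)%:R + (epspi + 3%:R * epsV + epspsi).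
  have detour := @dist_detour_le R S e Vw epsV hV s (phi s sg) sg epspsi.
  have /detour : Vw s sg - Vw s (phi s sg) - Vw (phi s sg) sg <= epspsi.
    by apply: le_trans (hpsi s sg); rewrite le_max lexx orbT.
  by move: (hpi s sg); lra.
have telescoped : \sum_(k < M) ((C (traj k) (traj k.+1))%:R : R)
    + (dist e (traj M) sg)%:R
    <= (dist e s0 sg)%:R + M%:R * (epspi + 3%:R * epsV + epspsi).
  rewrite -htraj0; apply: (@telescope_sum_le R
    (fun k => (C (traj k) (traj k.+1))%:R) (fun k => (dist e (traj k) sg)%:R))
    => k ltkM.
  by rewrite htrajS.
by apply: le_trans telescoped; rewrite lerDl.
Qed.
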